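(* Strong admissibility semantics is serialisable with the selection function $\alpha_{gr}(X,Y,Z)=X$ and the termination function $\beta_{adm}(F,S)=1$ for all $F,S$.
   Context: An abstract argumentation framework (AF) is a pair $F=(A,R)$ with $A$ a finite subset of a fixed universal set of arguments $\mathfrak{A}$ and $R\subseteq A\times A$ ($a\to b$ means $(a,b)\in R$). For $S\subseteq A$: $S^+=\{a\mid \exists b\in S: b\to a\}$, $S^-=\{a\mid\exists b\in S: a\to b\}$; for sets $S,S'$, $S\to S'$ means $S^+\cap S'\neq\emptyset$. $S$ defends $b$ if every attacker of $b$ is attacked by some element of $S$; $S$ is admissible if it is conflict-free and defends all its elements. An admissible set $E$ is strongly admissible if $E=\emptyset$ or each $a\in E$ is defended by some strongly admissible $E'\subseteq E\setminus\{a\}$; strong admissibility semantics assigns to $F$ the set of its strongly admissible sets. An initial set is a non-empty admissible set with no non-empty admissible proper subset; $\mathrm{IS}(F)$ is the set of initial sets. An initial set $S$ is unattacked if $S^-=\emptyset$; unchallenged if $S^-\neq\emptyset$ and no $S'\in\mathrm{IS}(F)$ has $S'\to S$; challenged if some $S'\in\mathrm{IS}(F)$ has $S'\to S$. Write $\mathrm{IS}^{u}(F),\mathrm{IS}^{uc}(F),\mathrm{IS}^{c}(F)$ for these sets. The reduct is $F^S=(A',R\cap(A'\times A'))$ with $A'=A\setminus(S\cup S^+)$. A selection function $\alpha$ maps any three sets $X,Y,Z$ of sets of arguments to a subset of $X\cup Y\cup Z$; a termination function $\beta$ maps pairs $(F,S)$ to $\{0,1\}$. Transitions: $(F,S)\to(F^{S'},S\cup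 S')$ whenever $S'\in\alpha(\mathrm{IS}^u(F),\mathrm{IS}^{uc}(F),\mathrm{IS}^c(F))$. $(F,S)\leadsto^{\alpha,\beta}(F',S')$ means $(F',S')$ is reachable from $(F,S)$ in finitely many (possibly zero) transitions and $\beta(F',S')=1$. $\mathcal{E}^{\alpha,\beta}(F)$ is the set of all $S$ with $(F,\emptyset)\leadsto^{\alpha,\beta}(F',S)$ for some $F'$. A semantics $\sigma$ is serialisable with $\alpha,\beta$ if $\sigma(F)=\mathcal{E}^{\alpha,\beta}(F)$ for all AFs $F$. *)

From HB Require Import structures.
From mathcomp Require Import all_boot.
From mathcomp Require Import finmap.
Set Implicit Arguments. Unset Strict Implicit. Unset Printing Implicit Defensive.
Local Open Scope fset_scope.

Section AFdefs.
Variable U : choiceType.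

Record AF := mkAF { args : {fset U}; att : {fset (U * U)} }.

Definition AF_wf (F : AF) : Prop :=
  forall p, p \in att F -> p.1 \in args F /\ p.2 \in args F.

Definition attacks (F : AF) (a b : U) : Prop := (a, b) \in att F.

Definition set_attacks (F : AF) (S S' : {fset U}) : Prop :=
  exists a b, a \in S /\ b \in S' /\ attacks F a b.

Definition conflict_free (F : AF) (S : {fset U}) : Prop :=
  forall a b, a \in S -> b \in S -> ~ attacks F a b.

Definition defends (F : AF) (S : {fset U}) (b : U) : Prop :=
  forall c, attacks F c b -> exists d, d \in S /\ attacks F d c.

Definition admissible (F : AF) (S : {fset U}) : Prop :=
  S `<=` args F /\ conflict_free F S /\ (forall a, a \in S -> defends F S a).

(* strongly admissible sets (least solution of the recursive definition) *)
Inductive strongly_admissible (F : AF) : {fset U} -> Prop :=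
| sa_intro (E : {fset U}) :
    admissible F E ->
    (E = fset0 \/
     forall a, a \in E -> exists E' : {fset U},
         strongly_admissible F E' /\ E' `<=` E `\ a /\ defends F E' a) ->
    strongly_admissible F E.

Definition initial (F : AF) (S : {fset U}) : Prop :=
  S != fset0 /\ admissible F S /\
  (forall S' : {fset U}, S' `<` S -> S' != fset0 -> ~ admissible F S').

Definition IS_u (F : AF) (S : {fset U}) : Prop :=
  initial F S /\ (forall a b, b \in S -> ~ attacks F a b).

Definition IS_uc (F : AF) (S : {fset U}) : Prop :=
  initial F S /\ (exists a b, b \in S /\ attacks F a b) /\
  ~ (exists S', initial F S' /\ set_attacks F S' S).

Definition IS_c (F : AF) (S : {fset U}) : Prop :=
  initial F S /\ (exists S', initial F S' /\ set_attacks F S' S).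

Definition reduct (F : AF) (S : {fset U}) : AF :=
  let A' := [fset a in args F | (a \notin S) && ~~ has (fun b => (b, a) \in att F) S] in
  mkAF A' [fset p in att F | (p.1 \in A') && (p.2 \in A')].

Definition setset := {fset U} -> Prop.

Definition selection := setset -> setset -> setset -> setset.
Definition termination := AF -> {fset U} -> bool.

Definition trans (alpha : selection) (c c' : AF * {fset U}) : Prop :=
  exists S', alpha (IS_u c.1) (IS_uc c.1) (IS_c c.1) S' /\
             c' = (reduct c.1 S', c.2 `|` S').

Inductive reach (alpha : selection) : AF * {fset U} -> AF * {fset U} -> Prop :=
| reach_refl c : reach alpha c c
| reach_step c c' c'' : trans alpha c c' -> reach alpha c' c'' -> reach alpha c c''.

Definition ext (alpha : selection) (beta : termination) (F : AF) : setset :=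
  fun S => exists F', reach alpha (F, fset0) (F', S) /\ beta F' S = true.

Definition serialisable (sigma : AF -> setset) (alpha : selection)
  (beta : termination) : Prop :=
  forall F, AF_wf F -> forall S, sigma F S <-> ext alpha beta F S.

Definition alpha_gr : selection := fun X _ _ => X.
Definition beta_adm : termination := fun _ _ => true.

End AFdefs.

(** A strongly admissible set grows one defended argument at a time: if [T] is
    contained in a strongly admissible [E] and differs from it, some argument
    of [E \ T] is defended by [T], and such an argument is unattacked in the
    reduct [F^T], hence a singleton unattacked initial set of [F^T].
    Conversely, adding to a strongly admissible [T] an unattacked initial set
    [S] of [F^T] keeps strong admissibility, since every attacker of [S] in [F]
    must already be attacked by [T].  As [(F^T)^S = F^(T ∪ S)], the states
    reachable from [(F, ∅)] are exactly the pairs [(F^E, E)] with [E]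
    strongly admissible. *)
From mathcomp Require Import all_boot finmap.
Set Implicit Arguments. Unset Strict Implicit. Unset Printing Implicit Defensive.
Local Open Scope fset_scope.

Section Reduct.
Variable U : choiceType.
Implicit Types (F : AF U) (S T : {fset U}).

Lemma AF_eq F F' : args F = args F' -> att F = att F' -> F = F'.
Proof. by case: F F' => A R [A' R'] /= -> ->. Qed.

Lemma reduct_argsP F S x :
  reflect [/\ x \in args F, x \notin S & forall s, s \in S -> ~ attacks F s x]
          (x \in args (reduct F S)).
Proof.
rewrite /reduct /= !inE; apply: (iffP and3P) => -[xF xS nS]; split=> //.
- by move=> s sS sx; case/hasP: nS; exists s.
- by apply/hasPn => s sS; apply/negP; apply: nS.
Qed.

Lemma attacks_reduct F S a b :
  attacks (reduct F S) a b <->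
  [/\ attacks F a b, a \in args (reduct F S) & b \in args (reduct F S)].
Proof. by rewrite /attacks {1}/reduct /= !inE; split=> /and3P. Qed.

Lemma reduct_args_sub F S : args (reduct F S) `<=` args F.
Proof. by apply/fsubsetP => x /reduct_argsP[]. Qed.

Lemma reduct0 F : AF_wf F -> reduct F fset0 = F.
Proof.
move=> wfF; have eA : args (reduct F fset0) = args F.
  apply/fsetP => x; apply/reduct_argsP/idP => [[] // | xF].
  by split=> // [|s]; rewrite inE.
apply: AF_eq => //; apply/fsetP => -[a b].
apply/idP/idP => [/attacks_reduct[] // | ab].
by apply/attacks_reduct; rewrite eA; have [] := wfF _ ab.
Qed.

Lemma reductU F S S' : S' `<=` args (reduct F S) ->
  reduct (reduct F S) S' = reduct F (S `|` S').
Proof.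
move=> /fsubsetP S'sub.
have eA : args (reduct (reduct F S) S') = args (reduct F (S `|` S')).
  apply/fsetP => x; apply/reduct_argsP/reduct_argsP.
  - move=> [/reduct_argsP[xF xS nS] xS' nS']; split=> //.
    + by rewrite inE negb_or xS.
    + move=> s; rewrite inE => /orP[/nS // | sS' sx].
      apply: (nS' s sS'); apply/attacks_reduct.
      by split=> //; [apply: S'sub | apply/reduct_argsP].
  - move=> [xF]; rewrite inE negb_or => /andP[xS xS'] nSS'; split=> //.
    + by apply/reduct_argsP; split=> // s sS; apply: nSS'; rewrite inE sS.
    + move=> s sS' /attacks_reduct[sx _ _].
      by apply: (nSS' s); rewrite // inE sS' orbT.
apply: AF_eq => //; apply/fsetP => -[a b].
apply/idP/idP => [/attacks_reduct[/attacks_reduct[ab _ _]] | /attacks_reduct[ab]].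
  by rewrite eA => aR bR; apply/attacks_reduct.
rewrite -eA => aR bR; have sub := fsubsetP (reduct_args_sub (reduct F S) S').
by apply/attacks_reduct; split=> //; apply/attacks_reduct; split=> //; apply: sub.
Qed.

End Reduct.

Section StrongAdmissibility.
Variable U : choiceType.
Implicit Types (F : AF U) (S T E : {fset U}).

Lemma defendsS F S S' a : S `<=` S' -> defends F S a -> defends F S' a.
Proof.
by move=> /fsubsetP sub def c /def[d [dS dc]]; exists d; split=> //; apply: sub.
Qed.

Lemma sa_admissible F E : strongly_admissible F E -> admissible F E.
Proof. by case. Qed.

Lemma sa_defended F E a : strongly_admissible F E -> a \in E ->
  exists E', [/\ strongly_admissible F E', E' `<=` E `\ a & defends F E' a].
Proof.
case=> {}E _ [-> | def]; first by rewrite inE.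
by move=> /def[E' [? [? ?]]]; exists E'.
Qed.

Lemma sa0 F : strongly_admissible F fset0.
Proof.
apply: sa_intro; last by left.
by split; [apply: fsub0set | split=> [a b | a]; rewrite inE].
Qed.

Lemma saU F T S : strongly_admissible F T -> S `<=` args F ->
  conflict_free F (T `|` S) -> (forall s, s \in S -> defends F T s) ->
  strongly_admissible F (T `|` S).
Proof.
move=> saT SF cfTS defS; have [TF [_ defT]] := sa_admissible saT.
have TsubTS := fsubsetUl T S.
apply: sa_intro.
  split; first by rewrite fsubUset TF.
  split=> // a; rewrite inE => /orP[/defT | /defS]; exact: defendsS.
right=> a aTS; case: (boolP (a \in T)) => [aT | aT].
  have [E' [saE' E'sub defE']] := sa_defended saT aT.
  exists E'; split=> //; split=> //; apply: fsubset_trans E'sub _.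
  by apply/fsubsetP => x; rewrite !inE => /andP[-> ->].
have aS : a \in S by move: aTS; rewrite inE (negbTE aT).
exists T; split=> //; split; last exact: defS.
by apply/fsubsetP => x xT; rewrite !inE xT andbT; apply: contraNneq aT => <-.
Qed.

Lemma sa_defended_outside F E T : strongly_admissible F E ->
  E `<=` T \/ exists a, [/\ a \in E, a \notin T & defends F T a].
Proof.
have [n] := ubnP #|`E|; elim: n E => // n IHn E ltEn saE.
case: (boolP (E `<=` T)) => [|/fsubsetPn[a aE aT]]; [by left | right].
have [E' [saE' E'sub defE']] := sa_defended saE aE.
have ltE'n : #|`E'| < n.
  rewrite -ltnS; apply: leq_ltn_trans _ ltEn.
  exact: leq_ltn_trans (fsubset_leq_card E'sub) (fproper_ltn_card (fproperD1 aE)).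
case: (IHn E' ltE'n saE') => [E'T | [b [bE' bT defb]]].
  by exists a; split=> //; apply: defendsS defE'.
by exists b; split=> //; move: (fsubsetP E'sub b bE'); rewrite inE => /andP[].
Qed.

End StrongAdmissibility.

Section Serialisation.
Variable U : choiceType.
Implicit Types (F G : AF U) (S T E : {fset U}).

Lemma IS_u_fset1 G a : a \in args G -> (forall c, ~ attacks G c a) ->
  IS_u G [fset a].
Proof.
move=> aG una; split; last by move=> c b; rewrite inE => /eqP ->.
split; first by apply/fset0Pn; exists a; rewrite inE.
split.
  split; first by rewrite fsub1set.
  split=> [x y _ | x]; rewrite inE => /eqP -> //; move=> c ca; case: (una c ca).
move=> S'; rewrite fproperEneq fsubset1 => /andP[neq /orP[/eqP eq | /eqP ->]].
  by rewrite eq eqxx in neq.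
by rewrite eqxx.
Qed.

Lemma reduct_unattacked F T a :
  defends F T a -> forall c, ~ attacks (reduct F T) c a.
Proof.
move=> defa c /attacks_reduct[ca /reduct_argsP[_ _ nT] _].
by have [d [dT dc]] := defa c ca; apply: (nT d).
Qed.

Lemma reduct_unattacked_defended F T s : AF_wf F ->
  s \in args (reduct F T) -> (forall c, ~ attacks (reduct F T) c s) ->
  defends F T s.
Proof.
move=> wfF sR una c cs; have [cF _] := wfF _ cs.
have /reduct_argsP[_ _ nTs] := sR.
case: (boolP (has (fun t => (t, c) \in att F) T)).
  by case/hasP=> t tT tc; exists t.
move/hasPn=> nTc.
case: (una c); apply/attacks_reduct; split=> //; apply/reduct_argsP; split=> //.
- by apply/negP => cT; apply: (nTs c cT).
- by move=> t tT tc; case/negP: (nTc t tT).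
Qed.

Lemma conflict_freeU_reduct F T S : admissible F T ->
  S `<=` args (reduct F T) -> conflict_free (reduct F T) S ->
  conflict_free F (T `|` S).
Proof.
move=> [_ [cfT defT]] /fsubsetP SR cfS a b; rewrite !inE.
move=> /orP[aT | aS] /orP[bT | bS] ab.
- exact: cfT aT bT ab.
- by have /reduct_argsP[_ _ nT] := SR b bS; apply: (nT a).
- have [d [dT da]] := defT b bT a ab.
  by have /reduct_argsP[_ _ nT] := SR a aS; apply: (nT d).
- by apply: (cfS a b aS bS); apply/attacks_reduct; split=> //; apply: SR.
Qed.

Lemma saU_IS_u_reduct F T S : AF_wf F -> strongly_admissible F T ->
  IS_u (reduct F T) S -> strongly_admissible F (T `|` S).
Proof.
move=> wfF saT [[_ [[SR [cfS _]] _]] unS].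
apply: saU => //.
- exact: fsubset_trans SR (reduct_args_sub _ _).
- exact: conflict_freeU_reduct (sa_admissible saT) SR cfS.
- move=> s sS; apply: reduct_unattacked_defended => // [|c]; last exact: unS.
  exact: (fsubsetP SR).
Qed.

Lemma reach_sa F T c : AF_wf F -> reach (@alpha_gr U) (reduct F T, T) c ->
  strongly_admissible F T -> strongly_admissible F c.2.
Proof.
move=> wfF; move eqc0 : (reduct F T, T) => c0 r.
elim: r T eqc0 => [c1 | c1 c2 c3 [S [ISuS ->]] _ IH] T eqT; subst c1 => //= saT.
have SR : S `<=` args (reduct F T) by case: ISuS => -[_ [[]]].
by apply: (IH (T `|` S)); [rewrite reductU | exact: saU_IS_u_reduct].
Qed.

Lemma reach_reduct_sa F E T : strongly_admissible F E -> T `<=` E ->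
  reach (@alpha_gr U) (reduct F T, T) (reduct F E, E).
Proof.
move=> saE; have [EF [cfE _]] := sa_admissible saE.
have [n] := ubnP #|`E `\` T|; elim: n T => // n IHn T ltn TE.
case: (sa_defended_outside T saE) => [ET | [a [aE aT defa]]].
  have -> : E = T by apply/eqP; rewrite eqEfsubset ET TE.
  exact: reach_refl.
have aR : a \in args (reduct F T).
  apply/reduct_argsP; split=> //; first exact: (fsubsetP EF).
  by move=> t tT; apply: cfE => //; apply: (fsubsetP TE).
have aRs : [fset a] `<=` args (reduct F T) by rewrite fsub1set.
have TaE : T `|` [fset a] `<=` E by rewrite fsubUset TE fsub1set.
apply: reach_step (IHn _ _ TaE); first last.
  rewrite -ltnS; apply: leq_ltn_trans _ ltn; apply: fproper_ltn_card.
  rewrite fproperD2l // fproperEneq fsubsetUl andbT.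
  by apply: contraNneq aT => ->; rewrite !inE eqxx orbT.
exists [fset a]; split; last by rewrite reductU.
exact: IS_u_fset1 aR (reduct_unattacked defa).
Qed.

End Serialisation.

Theorem theorem7 (U : choiceType) :
  serialisable (@strongly_admissible U) (@alpha_gr U) (@beta_adm U).
Proof.
move=> F wfF S; split=> [saS | [G [reachS _]]].
- exists (reduct F S); split=> //.
  by rewrite -{1}(reduct0 wfF); apply: reach_reduct_sa (fsub0set S).
- by move: reachS; rewrite -{1}(reduct0 wfF) => /reach_sa; apply; [|apply: sa0].
Qed.
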